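(* Let $\gamma\in(0,1)$, and let $\hat c^1,\hat c^2,\dots$ be i.i.d. real random variables with mean $c$ and variance $\sigma^2\in(0,\infty)$. Fix $n\ge2$ and deterministic stepsizes $\alpha_0,\dots,\alpha_{n-2}\in[0,1]$. Define $\bar v^0=0$ and, for $1\le m\le n-1$, $\hat v^m=\hat c^m+\gamma\bar v^{m-1}$, $\bar v^m=(1-\alpha_{m-1})\bar v^{m-1}+\alpha_{m-1}\hat v^m$; let $\hat v^n=\hat c^n+\gamma\bar v^{n-1}$ and, for $a\in\mathbb{R}$, $\bar v^n(a)=(1-a)\bar v^{n-1}+a\hat v^n$. Define $\delta^1=\alpha_0$, $\lambda^1=\alpha_0^2$ and, for $1<m\le n-1$, $\delta^m=\alpha_{m-1}+(1-(1-\gamma)\alpha_{m-1})\delta^{m-1}$, $\lambda^m=\alpha_{m-1}^2+(1-(1-\gamma)\alpha_{m-1})^2\lambda^{m-1}$. Then the value of $a\in[0,1]$ minimizing $\mathbb{E}\big[(\bar v^n(a)-\mathbb{E}\hat v^n)^2\big]$ is $$\alpha_{n-1}=\frac{(1-\gamma)\lambda^{n-1}\sigma^2+\big(1-(1-\gamma)\delta^{n-1}\big)^2c^2}{(1-\gamma)^2\lambda^{n-1}\sigma^2+\big(1-(1-\gamma)\delta^{n-1}\big)^2c^2+\sigma^2}.$$ *)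

From HB Require Import structures.
From mathcomp Require Import all_boot all_order all_algebra.
From mathcomp Require Import all_classical all_reals all_analysis.
Set Implicit Arguments. Unset Strict Implicit. Unset Printing Implicit Defensive.
Import Order.TTheory GRing.Theory Num.Theory.
Local Open Scope classical_set_scope.
Local Open Scope ring_scope.

Definition mutually_independent d (T : measurableType d) (R : realType)
  (P : probability T R) (Y : nat -> {RV P >-> R}) : Prop :=
  forall (s : seq nat) (B : nat -> set R),
    uniq s -> (forall i, measurable (B i)) ->
    P (\bigcap_(i in [set j | j \in s]) (Y i @^-1` B i)) =
    (\prod_(i <- s) P (Y i @^-1` B i))%E.

Definition identically_distributed d (T : measurableType d) (R : realType)
  (P : probability T R) (Y : nat -> {RV P >-> R}) : Prop :=
  forall i j (A : set R), measurable A ->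
    distribution P (Y i) A = distribution P (Y j) A.

Definition iid d (T : measurableType d) (R : realType)
  (P : probability T R) (Y : nat -> {RV P >-> R}) : Prop :=
  mutually_independent Y /\ identically_distributed Y.

Section defs.
Context d (T : measurableType d) (R : realType) (P : probability T R).
Variables (gamma : R) (alpha : nat -> R) (chat : nat -> {RV P >-> R}).

Fixpoint vbar (m : nat) : T -> R :=
  match m with
  | 0 => fun _ => 0
  | m'.+1 => fun t =>
      (1 - alpha m') * vbar m' t + alpha m' * (chat m'.+1 t + gamma * vbar m' t)
  end.

Definition vhat (m : nat) : T -> R := fun t => chat m t + gamma * vbar m.-1 t.

Definition vbar_a (n : nat) (a : R) : T -> R :=
  fun t => (1 - a) * vbar n.-1 t + a * vhat n t.
End defs.

(* delta^m and lambda^m; with delta^0 = lambda^0 = 0 the recursion gives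
   delta^1 = alpha_0 and lambda^1 = alpha_0^2 as in the paper. *)
Fixpoint delta (R : realType) (gamma : R) (alpha : nat -> R) (m : nat) : R :=
  match m with
  | 0 => 0
  | m'.+1 => alpha m' + (1 - (1 - gamma) * alpha m') * delta gamma alpha m'
  end.

Fixpoint lambda (R : realType) (gamma : R) (alpha : nat -> R) (m : nat) : R :=
  match m with
  | 0 => 0
  | m'.+1 => alpha m' ^+ 2
             + (1 - (1 - gamma) * alpha m') ^+ 2 * lambda gamma alpha m'
  end.

From HB Require Import structures.
From mathcomp Require Import all_boot all_order all_algebra.
From mathcomp Require Import all_classical all_reals all_analysis.
From mathcomp Require Import measurable_realfun.
From mathcomp Require Import ring lra zify.
Import Order.TTheory GRing.Theory Num.Theory.
Local Open Scope classical_set_scope.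
Local Open Scope ring_scope.

(* [\bar v^{n-1}] depends only on [\hat c^1, ..., \hat c^{n-1}], hence is
   uncorrelated with [\hat c^n]. By induction [E \bar v^m = c delta^m] and
   [Var \bar v^m = sigma^2 lambda^m], and splitting the mean squared error into
   variance plus squared bias gives, with [D = 1 - (1 - gamma) delta^{n-1}],
     J(a) = sigma^2 lambda^{n-1} (1 - (1 - gamma) a)^2 + sigma^2 a^2
            + c^2 D^2 (1 - a)^2,
   a quadratic in [a] with positive leading coefficient, minimal exactly at the
   stated [alpha_{n-1}]. That minimiser lies in [0, 1] because
   [(1 - gamma^2) lambda^m <= 1]. *)

Section independent_pair.
Context {d : measure_display} {T : measurableType d} {R : realType}.
Context {P : probability T R} {X Y : {RV P >-> R}}.

Definition pair_RV : T -> R * R := fun t => (X t, Y t).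

Lemma measurable_pair_RV : measurable_fun setT pair_RV.
Proof. exact: measurable_fun_pair. Qed.

HB.instance Definition _ :=
  isMeasurableFun.Build _ _ _ _ pair_RV measurable_pair_RV.

Let XY : {RV P >-> (R * R)%type} := pair_RV.

Local Open Scope ereal_scope.

Hypothesis XY_indep : forall A B, measurable A -> measurable B ->
  P (X @^-1` A `&` Y @^-1` B) = P (X @^-1` A) * P (Y @^-1` B).

Lemma distribution_pair_indep A : measurable A ->
  (distribution P X \x distribution P Y) A = distribution P XY A.
Proof.
apply: product_measure_unique => A1 A2 mA1 mA2.
by rewrite /distribution /pushforward -XY_indep.
Qed.

Lemma expectationM_indep : (X : T -> R) \in Lfun P 2%:E ->
  (Y : T -> R) \in Lfun P 2%:E ->
  'E_P[(X : T -> R) * (Y : T -> R)]%R = 'E_P[X] * 'E_P[Y].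
Proof.
move=> X2 Y2.
have Pfin : P setT \is a fin_num := fin_num_measure P _ measurableT.
have /Lfun1_integrable X1 := Lfun_subset12 Pfin X2.
have /Lfun1_integrable Y1 := Lfun_subset12 Pfin Y2.
have /Lfun1_integrable XY1 := Lfun2_mul_Lfun1 X2 Y2.
pose f (z : R * R) := (z.1 * z.2)%:E.
have mf : measurable_fun setT f.
  by apply/measurable_EFinP; apply: measurable_funM.
have iXY : (distribution P XY).-integrable setT f.
  exact: integrable_pushforward.
have iX : (distribution P X).-integrable setT EFin.
  exact: integrable_pushforward.
have iY : (distribution P Y).-integrable setT EFin.
  exact: integrable_pushforward.
have iprod : (distribution P X \x distribution P Y).-integrable setT f.
  apply/integrableP; split => //.
  rewrite (eq_measure_integral (distribution P XY)); last first.
    by move=> A mA _; exact: distribution_pair_indep.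
  by case/integrableP: iXY.
have EX : \int[distribution P X]_x x%:E = 'E_P[X].
  by rewrite unlock integral_distribution.
have EY : \int[distribution P Y]_y y%:E = 'E_P[Y].
  by rewrite unlock integral_distribution.
have EYfin : 'E_P[Y] = (fine 'E_P[Y])%:E.
  by rewrite fineK // expectation_fin_num // Lfun_subset12.
transitivity (\int[P]_t (f \o XY) t); first by rewrite unlock.
rewrite -integral_distribution //.
rewrite (eq_measure_integral (distribution P X \x distribution P Y));
  last by move=> A mA _; exact/esym/distribution_pair_indep.
rewrite -integral12_prod_meas1 //.
transitivity (\int[distribution P X]_x (x%:E * (fine 'E_P[Y])%:E)).
  apply: eq_integral => x _.
  rewrite /fubini_F /f (eq_integral (fun y => x%:E * y%:E)) //.
  by rewrite integralZl // EY EYfin.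
by rewrite integralZr // EX EYfin.
Qed.

Lemma covariance_indep : (X : T -> R) \in Lfun P 2%:E ->
  (Y : T -> R) \in Lfun P 2%:E -> covariance P X Y = 0.
Proof.
move=> X2 Y2.
have Pfin : P setT \is a fin_num := fin_num_measure P _ measurableT.
have X1 := Lfun_subset12 Pfin X2; have Y1 := Lfun_subset12 Pfin Y2.
rewrite covarianceE ?Lfun2_mul_Lfun1 // expectationM_indep //.
by rewrite subee // fin_numM // expectation_fin_num.
Qed.

End independent_pair.

Lemma mutually_independent_pair {d : measure_display} {T : measurableType d}
    {R : realType} {P : probability T R} {Y : nat -> {RV P >-> R}} k l :
  mutually_independent Y -> k != l ->
  forall A B, measurable A -> measurable B ->
  P (Y k @^-1` A `&` Y l @^-1` B) = (P (Y k @^-1` A) * P (Y l @^-1` B))%E.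
Proof.
move=> Yindep kl A B mA mB.
pose C i := if i == k then A else B.
have mC i : measurable (C i) by rewrite /C; case: ifP.
have := Yindep [:: k; l] C; rewrite /= inE andbT kl => /(_ isT mC).
rewrite !big_cons big_nil mule1 /C eqxx eq_sym (negbTE kl) => <-.
congr (P _); apply/seteqP; split => [t [tA tB] i /=|t Ht].
- by rewrite !inE => /orP[]/eqP->; rewrite ?eqxx // eq_sym (negbTE kl).
- split; first by have := Ht k; rewrite /= eqxx; apply; rewrite !inE eqxx.
  by have := Ht l; rewrite /= eq_sym (negbTE kl); apply; rewrite !inE eqxx orbT.
Qed.

Lemma expectation_sqr_sub_cst {d : measure_display} {T : measurableType d}
    {R : realType} {P : probability T R} {X : T -> R} {mu v m : R} :
  X \in Lfun P 2%:E -> ('E_P[X] = mu%:E)%E -> 'V_P[X] = v%:E ->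
  ('E_P[(X \- cst m) ^+ 2] = (v + (mu - m) ^+ 2)%:E)%E.
Proof.
move=> X2 EX VX.
have Pfin : P setT \is a fin_num := fin_num_measure P _ measurableT.
have Xm2 : (X \- cst m)%R \in Lfun P 2%:E.
  by rewrite rpredB ?lee1n // => ?; exact: Lfun_cst.
have EXm : ('E_P[X \- cst m] = (mu - m)%:E)%E.
  by rewrite expectationB ?Lfun_subset12 ?Lfun_cst // expectation_cst EX.
have fin2 : ('E_P[(X \- cst m) ^+ 2])%E \is a fin_num.
  by rewrite expectation_fin_num // expr2 Lfun2_mul_Lfun1.
have := varianceE Xm2; rewrite varianceB_cst_r // VX EXm.
rewrite -(fineK fin2) -EFin_expe -EFinB => -[->].
by congr (_%:E); ring.
Qed.

Section running_average.
Context {d : measure_display} {T : measurableType d} {R : realType}.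
Context {P : probability T R} {chat : nat -> {RV P >-> R}}.
Context {gamma c sigma : R} {alpha : nat -> R}.
Hypothesis chat_indep : mutually_independent (fun i => chat i.+1).
Hypothesis chat_Lfun2 :
  forall m, (1 <= m)%N -> (chat m : T -> R) \in Lfun P 2%:E.
Hypothesis chat_mean : forall m, (1 <= m)%N -> ('E_P[chat m] = c%:E)%E.
Hypothesis chat_var : forall m, (1 <= m)%N -> 'V_P[chat m] = (sigma ^+ 2)%:E.

Notation vb := (vbar gamma alpha chat).

Let Pfin : P setT \is a fin_num := fin_num_measure P _ measurableT.

Let Lfun21 [f : T -> R] : f \in Lfun P 2%:E -> f \in Lfun P 1.
Proof. exact: Lfun_subset12. Qed.

Let covarianceZl2 a [f g : T -> R] : f \in Lfun P 2%:E -> g \in Lfun P 2%:E ->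
  covariance P (a \o* f)%R g = (a%:E * covariance P f g)%E.
Proof.
by move=> f2 g2; rewrite covarianceZl ?Lfun2_mul_Lfun1 ?Lfun21.
Qed.

Let covarianceZr2 a [f g : T -> R] : f \in Lfun P 2%:E -> g \in Lfun P 2%:E ->
  covariance P f (a \o* g)%R = (a%:E * covariance P f g)%E.
Proof.
by move=> f2 g2; rewrite covarianceZr ?Lfun2_mul_Lfun1 ?Lfun21.
Qed.

Let Lfun2_scale a [f : T -> R] :
  f \in Lfun P 2%:E -> (a \o* f)%R \in Lfun P 2%:E.
Proof. by apply: Lfun_scale; rewrite ler1n. Qed.

Definition vbar_step (b a : R) (m : nat) : T -> R :=
  (b \o* vb m \+ a \o* (chat m.+1 : T -> R))%R.

Lemma vbarS m : vb m.+1 = vbar_step (1 - (1 - gamma) * alpha m) (alpha m) m.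
Proof. by apply/funext => t; rewrite /vbar_step /=; ring. Qed.

Lemma vbar_aS m a :
  vbar_a gamma alpha chat m.+1 a = vbar_step (1 - (1 - gamma) * a) a m.
Proof. by apply/funext => t; rewrite /vbar_a /vhat /vbar_step /=; ring. Qed.

Lemma vbar_Lfun2 m : vb m \in Lfun P 2%:E.
Proof.
elim: m => [|m IH]; first exact: (Lfun_cst P 0 2).
by rewrite vbarS rpredD ?lee1n // => [?|?]; rewrite Lfun2_scale ?chat_Lfun2.
Qed.

Lemma vbar_step_Lfun2 b a m : vbar_step b a m \in Lfun P 2%:E.
Proof.
by rewrite rpredD ?lee1n // => [?|?];
  rewrite Lfun2_scale ?vbar_Lfun2 ?chat_Lfun2.
Qed.

Lemma expectation_vbar_step b a m :
  ('E_P[vbar_step b a m] = b%:E * 'E_P[vb m] + (a * c)%:E)%E.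
Proof.
have vb2 := vbar_Lfun2 m; have ch2 := chat_Lfun2 m.+1 isT.
rewrite expectationD ?Lfun21 ?Lfun2_scale //.
by rewrite !expectationZl ?Lfun21 // chat_mean.
Qed.

Lemma expectation_vbar m : ('E_P[vb m] = (c * delta gamma alpha m)%:E)%E.
Proof.
elim: m => [|m IH]; first by rewrite mulr0 (expectation_cst P 0).
rewrite vbarS expectation_vbar_step IH -EFinM -EFinD /=; congr (_%:E); ring.
Qed.

Lemma expectation_vhat m :
  ('E_P[vhat gamma alpha chat m.+1]
   = (c + gamma * (c * delta gamma alpha m))%:E)%E.
Proof.
have -> : vhat gamma alpha chat m.+1 = (chat m.+1 \+ gamma \o* vb m)%R.
  by apply/funext => t; rewrite /vhat /= mulrC.
rewrite expectationD ?Lfun21 ?Lfun2_scale ?chat_Lfun2 ?vbar_Lfun2 //.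
by rewrite expectationZl ?Lfun21 ?vbar_Lfun2 // chat_mean // expectation_vbar.
Qed.

Lemma covariance_vbar_chat m j :
  (m <= j)%N -> covariance P (vb m) (chat j.+1) = 0%E.
Proof.
elim: m => [_|m IH mj]; first exact: (covariance_cst_l P 0).
have ch2 := chat_Lfun2 j.+1 isT; have vb2 := vbar_Lfun2 m.
have chm2 := chat_Lfun2 m.+1 isT.
rewrite vbarS covarianceDl ?Lfun2_scale // (covarianceZl2 _ vb2 ch2).
rewrite (covarianceZl2 _ chm2 ch2) IH ?(ltnW mj) //.
rewrite (covariance_indep (mutually_independent_pair m j chat_indep _))
  ?ltn_eqF //.
by rewrite !mule0 adde0.
Qed.

Lemma variance_vbar_step b a m :
  'V_P[vbar_step b a m]
  = ((b ^+ 2)%:E * 'V_P[vb m] + (a ^+ 2 * sigma ^+ 2)%:E)%E.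
Proof.
have vb2 := vbar_Lfun2 m; have ch2 := chat_Lfun2 m.+1 isT.
rewrite varianceD ?Lfun2_scale // !varianceZ // chat_var //.
rewrite (covarianceZl2 _ vb2 (Lfun2_scale _ ch2)) (covarianceZr2 _ vb2 ch2).
by rewrite covariance_vbar_chat // !mule0 adde0 EFinM.
Qed.

Lemma variance_vbar m : 'V_P[vb m] = (sigma ^+ 2 * lambda gamma alpha m)%:E.
Proof.
elim: m => [|m IH]; first by rewrite mulr0 (variance_cst P 0).
rewrite vbarS variance_vbar_step IH -EFinM -EFinD /=; congr (_%:E); ring.
Qed.

Lemma mean_squared_error_vbar_a m a :
  ('E_P[fun t => ((vbar_a gamma alpha chat m.+1 a t
                   - fine 'E_P[vhat gamma alpha chat m.+1]) ^+ 2)%R]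
   = (sigma ^+ 2 * lambda gamma alpha m * (1 - (1 - gamma) * a) ^+ 2
      + sigma ^+ 2 * a ^+ 2
      + c ^+ 2 * (1 - (1 - gamma) * delta gamma alpha m) ^+ 2
        * (1 - a) ^+ 2)%:E)%E.
Proof.
set b := 1 - (1 - gamma) * a.
rewrite expectation_vhat /=.
have -> : (fun t => ((vbar_a gamma alpha chat m.+1 a t
                     - (c + gamma * (c * delta gamma alpha m))) ^+ 2)%R)
    = ((vbar_step b a m \- cst (c + gamma * (c * delta gamma alpha m))) ^+ 2)%R.
  by apply/funext => t; rewrite vbar_aS.
have Emix : ('E_P[vbar_step b a m]
    = (b * (c * delta gamma alpha m) + a * c)%:E)%E.
  by rewrite expectation_vbar_step expectation_vbar -EFinM -EFinD.
have Vmix : 'V_P[vbar_step b a m]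
    = (b ^+ 2 * (sigma ^+ 2 * lambda gamma alpha m) + a ^+ 2 * sigma ^+ 2)%:E.
  by rewrite variance_vbar_step variance_vbar -EFinM -EFinD.
rewrite (expectation_sqr_sub_cst (vbar_step_Lfun2 b a m) Emix Vmix).
by congr (_%:E); rewrite /b; ring.
Qed.
End running_average.

Lemma lambda_bounds (R : realType) (gamma : R) (alpha : nat -> R) m :
  0 < gamma < 1 -> (forall i, (i < m)%N -> 0 <= alpha i <= 1) ->
  0 <= lambda gamma alpha m /\ (1 - gamma ^+ 2) * lambda gamma alpha m <= 1.
Proof.
move=> /andP[g0 g1]; elim: m => [|m IH] alpha01 /=.
  by rewrite mulr0 ler01.
have [lam0 lam1] := IH (fun i im => alpha01 i (ltnW im)).
have /andP[a0 a1] := alpha01 m (ltnSn m).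
set lam := lambda gamma alpha m; set b := 1 - (1 - gamma) * alpha m.
split; first by rewrite addr_ge0 ?sqr_ge0 // mulr_ge0 // sqr_ge0.
have step : (1 - gamma ^+ 2) * alpha m ^+ 2 + b ^+ 2 <= 1.
  have -> : (1 - gamma ^+ 2) * alpha m ^+ 2 + b ^+ 2
      = 1 - 2 * (1 - gamma) * alpha m * (1 - alpha m) by rewrite /b; ring.
  by rewrite gerBl !mulr_ge0 ?subr_ge0 // ltW.
have : b ^+ 2 * ((1 - gamma ^+ 2) * lam) <= b ^+ 2 by rewrite ler_piMr ?sqr_ge0.
by rewrite mulrDr; lra.
Qed.

Lemma quadratic_lt_argmin (R : realFieldType) (A B C x : R) :
  0 < A -> x != B / A ->
  A * (B / A) ^+ 2 - 2 * B * (B / A) + C < A * x ^+ 2 - 2 * B * x + C.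
Proof.
move=> A0 xNBA; rewrite -subr_gt0.
have -> : A * x ^+ 2 - 2 * B * x + C - (A * (B / A) ^+ 2 - 2 * B * (B / A) + C)
    = A * (x - B / A) ^+ 2 by field; rewrite gt_eqF.
by rewrite mulr_gt0 // exprn_even_gt0 // subr_eq0.
Qed.

Lemma optimal_stepsize_bounds (R : realFieldType) (gamma lam s k : R) :
  0 < gamma < 1 -> 0 <= lam -> (1 - gamma ^+ 2) * lam <= 1 -> 0 < s -> 0 <= k ->
  0 <= ((1 - gamma) * lam * s + k) / ((1 - gamma) ^+ 2 * lam * s + k + s) <= 1.
Proof.
move=> /andP[g0 g1] lam0 lam1 s0 k0.
have lams0 : 0 <= lam * s by rewrite mulr_ge0 // ltW.
have : 0 <= (1 - gamma) ^+ 2 * (lam * s) by rewrite mulr_ge0 ?sqr_ge0.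
have : 0 <= (1 - gamma) * (lam * s) by rewrite mulr_ge0 // subr_ge0 ltW.
rewrite !mulrA => num0 den0.
have den_gt0 : 0 < (1 - gamma) ^+ 2 * lam * s + k + s by lra.
apply/andP; split; first by apply: divr_ge0; lra.
rewrite ler_pdivrMr // mul1r.
have : gamma * (1 - gamma) * lam <= 1 by nra.
nra.
Qed.

Theorem theorem3 (d : measure_display) (T : measurableType d) (R : realType)
  (P : probability T R) (chat : nat -> {RV P >-> R})
  (gamma c sigma : R) (n : nat) (alpha : nat -> R) :
  0 < gamma < 1 ->
  iid (fun i => chat i.+1) ->
  (forall m, (1 <= m)%N -> (chat m : T -> R) \in Lfun P 2%:E) ->
  (forall m, (1 <= m)%N -> ('E_P[chat m] = c%:E)%E) ->
  (forall m, (1 <= m)%N -> 'V_P[chat m] = (sigma ^+ 2)%:E) ->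
  0 < sigma ->
  (2 <= n)%N ->
  (forall i, (i <= n - 2)%N -> 0 <= alpha i <= 1) ->
  let J := fun a : R =>
    ('E_P[fun t => ((vbar_a gamma alpha chat n a t
                   - fine 'E_P[vhat gamma alpha chat n]) ^+ 2)%R])%E in
  let del := delta gamma alpha n.-1 in
  let lam := lambda gamma alpha n.-1 in
  let astar :=
    ((1 - gamma) * lam * sigma ^+ 2 + (1 - (1 - gamma) * del) ^+ 2 * c ^+ 2) /
    ((1 - gamma) ^+ 2 * lam * sigma ^+ 2 + (1 - (1 - gamma) * del) ^+ 2 * c ^+ 2
     + sigma ^+ 2) in
  0 <= astar <= 1 /\
  (forall a : R, 0 <= a <= 1 -> a != astar -> (J astar < J a)%E).
Proof.
move=> gamma01 [chat_indep _] chat_Lfun2 chat_mean chat_var sigma0.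
case: n => [|N] // n2 alpha01 J del lam astar.
have [lam0 lam1] : 0 <= lam /\ (1 - gamma ^+ 2) * lam <= 1.
  by apply: lambda_bounds => // i iN; apply: alpha01; lia.
set k := (1 - (1 - gamma) * del) ^+ 2 * c ^+ 2.
set A := (1 - gamma) ^+ 2 * lam * sigma ^+ 2 + k + sigma ^+ 2.
set B := (1 - gamma) * lam * sigma ^+ 2 + k.
have JE a : J a = (A * a ^+ 2 - 2 * B * a + (sigma ^+ 2 * lam + k))%:E.
  rewrite /J.
  rewrite (mean_squared_error_vbar_a chat_indep chat_Lfun2 chat_mean chat_var).
  by congr (_%:E); rewrite /A /B /k /lam /del /=; ring.
have s0 : 0 < sigma ^+ 2 by rewrite exprn_gt0.
have k0 : 0 <= k by rewrite mulr_ge0 ?sqr_ge0.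
have A0 : 0 < A.
  have := mulr_ge0 (mulr_ge0 (sqr_ge0 (1 - gamma)) lam0) (ltW s0).
  by rewrite /A; lra.
split; first exact: optimal_stepsize_bounds.
move=> a _ aNastar; rewrite !JE lte_fin; exact: quadratic_lt_argmin.
Qed.
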